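(* Let $X_k\in\operatorname{Gr}(n,r)$ and let $s_{k-m},\dots,s_{k-1},y_{k-m},\dots,y_{k-1}\in\mathbb{R}^{nr}$ be vectorizations of tangent vectors in $\mathbf{T}_{X_k}$. Let $S_k=[s_{k-m},\dots,s_{k-1}]$, $Y_k=[y_{k-m},\dots,y_{k-1}]$, $D_k=\operatorname{diag}[s_{k-m}^{\mathsf{T}}y_{k-m},\dots,s_{k-1}^{\mathsf{T}}y_{k-1}]$, let $R_k$ be the $m\times m$ upper triangular matrix with $(i,j)$ entry $s_{k-m+i-1}^{\mathsf{T}}y_{k-m+j-1}$ for $i\le j$ (assumed invertible), let $\gamma_k\in\mathbb{R}$, and let \[ H_k=\gamma_kI+\begin{bmatrix}S_k&\gamma_kY_k\end{bmatrix}\begin{bmatrix}R_k^{-\mathsf{T}}(D_k+\gamma_kY_k^{\mathsf{T}}Y_k)R_k^{-1}&-R_k^{-\mathsf{T}}\\-R_k^{-1}&0\end{bmatrix}\begin{bmatrix}S_k^{\mathsf{T}}\\ \gamma_kY_k^{\mathsf{T}}\end{bmatrix}. \] Then the (vectorized) tangent space $\mathbf{T}_{X_k}$ is an invariant subspace of $H_k$: if $v$ is the vectorization of a tangent in $\mathbf{T}_{X_k}$, then so is $H_kv$.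
   Context: Points of $\operatorname{Gr}(n,r)$ are represented by $X\in\mathbb{R}^{n\times r}$ with $X^{\mathsf{T}}X=I$; the tangent space is $\mathbf{T}_X=\{\Delta\in\mathbb{R}^{n\times r}:X^{\mathsf{T}}\Delta=0\}$, embedded in $\mathbb{R}^{nr}$ by column-wise vectorization. $H_k$ is the limited-memory BFGS (L-BFGS) compact representation of the Hessian approximation. *)

From HB Require Import structures.
From mathcomp Require Import all_boot all_order all_algebra.
Set Implicit Arguments. Unset Strict Implicit. Unset Printing Implicit Defensive.
Import Order.TTheory GRing.Theory Num.Theory.
Local Open Scope ring_scope.

(* Column-wise vectorization of an n x r matrix: entry (i,j) goes to index
   j*n + i.  mxvec is row-major, so we vectorize the transpose. The result
   lives in 'cV_(r*n) (= R^{nr}). *)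
Definition cvec (F : pzRingType) (n r : nat) (A : 'M[F]_(n, r)) : 'cV[F]_(r * n) :=
  (mxvec A^T)^T.

Definition grass_point (F : pzRingType) (n r : nat) (X : 'M[F]_(n, r)) : Prop :=
  X^T *m X = 1%:M.

Definition tangent (F : pzRingType) (n r : nat) (X : 'M[F]_(n, r))
  (D : 'M[F]_(n, r)) : Prop := X^T *m D = 0.

Definition vec_tangent (F : pzRingType) (n r : nat) (X : 'M[F]_(n, r))
  (v : 'cV[F]_(r * n)) : Prop :=
  exists D : 'M[F]_(n, r), tangent X D /\ v = cvec D.

Definition cols (F : pzRingType) (N m : nat) (s : 'I_m -> 'cV[F]_N) : 'M[F]_(N, m) :=
  \matrix_(i < N, j < m) s j i ord0.

Definition Dmat (F : pzRingType) (N m : nat) (s y : 'I_m -> 'cV[F]_N) : 'M[F]_m :=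
  \matrix_(i < m, j < m) (if i == j then ((s i)^T *m y i) ord0 ord0 else 0).

Definition Rmat (F : pzRingType) (N m : nat) (s y : 'I_m -> 'cV[F]_N) : 'M[F]_m :=
  \matrix_(i < m, j < m) (if (i <= j)%N then ((s i)^T *m y j) ord0 ord0 else 0).

Definition Hmat (F : comUnitRingType) (N m : nat) (s y : 'I_m -> 'cV[F]_N)
  (g : F) : 'M[F]_N :=
  let S := cols s in
  let Y := cols y in
  let Ri := invmx (Rmat s y) in
  g%:M + row_mx S (g *: Y) *m
    block_mx (Ri^T *m (Dmat s y + g *: (Y^T *m Y)) *m Ri) (- Ri^T)
             (- Ri) (0 : 'M_m)
    *m col_mx S^T (g *: Y^T).

From HB Require Import structures.
From mathcomp Require Import all_boot all_order all_algebra.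
Import Order.TTheory GRing.Theory Num.Theory.
Local Open Scope ring_scope.

(* Vectorized tangent vectors at X form the kernel of a linear map, hence a
   submodule. H_k is a multiple of the identity plus a matrix whose columns
   are combinations of the s_j and y_j, which are tangent; so H_k preserves
   that submodule. *)

Section VecTangent.
Variables (F : comPzRingType) (n r : nat) (X : 'M[F]_(n, r)).

Definition unvec (v : 'cV[F]_(r * n)) : 'M[F]_(n, r) := (vec_mx v^T)^T.

Lemma cvecK : cancel (@cvec F n r) unvec.
Proof. by move=> A; rewrite /unvec /cvec trmxK mxvecK trmxK. Qed.

Lemma unvecK : cancel unvec (@cvec F n r).
Proof. by move=> v; rewrite /cvec /unvec trmxK vec_mxK trmxK. Qed.

Lemma vec_tangentP v : vec_tangent X v <-> X^T *m unvec v = 0.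
Proof.
split; first by case=> D [XD ->]; rewrite cvecK.
by move=> Xv; exists (unvec v); rewrite unvecK.
Qed.

Lemma unvecD u w : unvec (u + w) = unvec u + unvec w.
Proof. by rewrite /unvec !linearD. Qed.

Lemma unvecZ a u : unvec (a *: u) = a *: unvec u.
Proof. by rewrite /unvec !linearZ. Qed.

Lemma vec_tangent0 : vec_tangent X 0.
Proof. by exists 0; rewrite /tangent mulmx0 /cvec !linear0. Qed.

Lemma vec_tangentD u w :
  vec_tangent X u -> vec_tangent X w -> vec_tangent X (u + w).
Proof.
move=> /vec_tangentP Xu /vec_tangentP Xw; apply/vec_tangentP.
by rewrite unvecD mulmxDr Xu Xw addr0.
Qed.

Lemma vec_tangentZ a u : vec_tangent X u -> vec_tangent X (a *: u).
Proof.
by move=> /vec_tangentP Xu; apply/vec_tangentP; rewrite unvecZ -scalemxAr Xu scaler0.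
Qed.

Lemma vec_tangent_sum (I : finType) (f : I -> 'cV[F]_(r * n)) :
  (forall i, vec_tangent X (f i)) -> vec_tangent X (\sum_i f i).
Proof.
by move=> Xf; apply: (big_ind (vec_tangent X)) => //; [exact: vec_tangent0 | exact: vec_tangentD].
Qed.

Lemma cols_mulmx m (s : 'I_m -> 'cV[F]_(r * n)) (a : 'cV[F]_m) :
  cols s *m a = \sum_j a j ord0 *: s j.
Proof.
apply/matrixP=> i k; rewrite !mxE summxE; apply: eq_bigr => j _.
by rewrite !mxE (ord1 k) mulrC.
Qed.

Lemma vec_tangent_cols_mulmx m (s : 'I_m -> 'cV[F]_(r * n)) (a : 'cV[F]_m) :
  (forall j, vec_tangent X (s j)) -> vec_tangent X (cols s *m a).
Proof.
by move=> Xs; rewrite cols_mulmx; apply: vec_tangent_sum => j; apply: vec_tangentZ.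
Qed.

End VecTangent.

Lemma vec_tangent_Hmat (F : comUnitRingType) (n r m : nat) (X : 'M[F]_(n, r))
  (s y : 'I_m -> 'cV[F]_(r * n)) (g : F) (v : 'cV[F]_(r * n)) :
  (forall j, vec_tangent X (s j)) -> (forall j, vec_tangent X (y j)) ->
  vec_tangent X v -> vec_tangent X (Hmat s y g *m v).
Proof.
move=> Xs Xy Xv; rewrite /Hmat mulmxDl mul_scalar_mx.
apply: vec_tangentD; first exact: vec_tangentZ.
rewrite -!mulmxA; set w := (X in row_mx _ _ *m X).
rewrite -[w]vsubmxK mul_row_col -scalemxAl.
by apply: vec_tangentD; [|apply: vec_tangentZ]; apply: vec_tangent_cols_mulmx.
Qed.

Theorem lemma7p1 (F : realFieldType) (n r m : nat) (X : 'M[F]_(n, r))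
  (s y : 'I_m -> 'cV[F]_(r * n)) (g : F) :
  grass_point X ->
  (forall j, vec_tangent X (s j)) ->
  (forall j, vec_tangent X (y j)) ->
  Rmat s y \in unitmx ->
  forall v : 'cV[F]_(r * n), vec_tangent X v -> vec_tangent X (Hmat s y g *m v).
Proof. by move=> _ Xs Xy _ v; apply: vec_tangent_Hmat. Qed.
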